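(* Let $C\subseteq F^n$ be a binary perfect code of length $n=2^k-1$ containing $0^n$, and let $\lambda:C\to\{0,1\}$ be any function with $\lambda(0^n)=0$. Let $V_C^\lambda=\{(x+y,\ |x|+\lambda(y),\ x)\mid x\in F^n,\ y\in C\}\subseteq F^{2n+1}$ be the Vasil'ev code, where $|x|=x_1+\dots+x_n \pmod 2$. Let $y'\in C$ and $z=(y',\lambda(y'),0^n)\in V_C^\lambda$. A permutation $\rho_z\in S_{2n+1}$ belongs to $St_{n+1}(\mathrm{Rot}_z(V_C^\lambda))$ if and only if it can be written as $\rho_z=\sigma_{\pi_{y'}}\circ\tau_u$ for some $\pi_{y'}\in \mathrm{Rot}_{y'}(C)$ and some $u\in F^n$ such that for every $y\in C$ $$\lambda(y')+\lambda(y)+\lambda(y'+\pi_{y'}(y))=u\cdot y,$$ where $u\cdot y$ is the scalar product over $\mathbb{F}_2$.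
   Context: $F^n$ is the space of binary vectors of length $n$ with the Hamming metric. A binary code $C\subseteq F^n$ is perfect (1-error-correcting) if every $x\in F^n$ is at distance at most one from exactly one codeword. Permutations $\pi\in S_n$ act on vectors by permuting coordinates. For a code $D$ of length $m$ and a vector $z$, $\mathrm{Rot}_z(D)=\{\pi\in S_m\mid z+\pi(D)=D\}$, and $St_{i}(\mathrm{Rot}_z(D))$ denotes the set of permutations in $\mathrm{Rot}_z(D)$ fixing the coordinate $i$. For $i\in\{1,\dots,n\}$ let $t_i$ be the transposition of coordinates $i$ and $i+n+1$ in $S_{2n+1}$, and for $u\in F^n$ let $\tau_u=\prod_{i\in \mathrm{supp}(u)}t_i$. For $\pi\in S_n$ the duplicator $\sigma_\pi\in S_{2n+1}$ maps $i\mapsto\pi(i)$ and $i+n+1\mapsto \pi(i)+n+1$ for $1\le i\le n$, and fixes $n+1$. Composition $\sigma\circ\tau$ means $\tau$ is applied first. *)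

From mathcomp Require Import all_boot all_fingroup.
Set Implicit Arguments. Unset Strict Implicit. Unset Printing Implicit Defensive.

Definition bvec (n : nat) := {ffun 'I_n -> bool}.

Definition bzero (n : nat) : bvec n := [ffun => false].
Definition vadd (n : nat) (x y : bvec n) : bvec n := [ffun i => x i (+) y i].

Definition hdist (n : nat) (x y : bvec n) : nat := #|[set i | x i != y i]|.

Definition perfect (n : nat) (C : {set bvec n}) : Prop :=
  forall x : bvec n, #|[set c in C | hdist x c <= 1]| = 1.

Definition wt2 (n : nat) (x : bvec n) : bool := \big[addb/false]_(i < n) x i.

Definition dot (n : nat) (u y : bvec n) : bool := \big[addb/false]_(i < n) (u i && y i).

(* action of permutations on vectors: (pi x)_{pi i} = x_i *)
Definition permv (m : nat) (pi : {perm 'I_m}) (x : bvec m) : bvec m :=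
  [ffun j => x ((pi^-1)%g j)].

Definition Rot (m : nat) (z : bvec m) (D : {set bvec m}) : {set {perm 'I_m}} :=
  [set pi : {perm 'I_m} | [set vadd z (permv pi x) | x in D] == D].

Definition St (m : nat) (i : 'I_m) (S : {set {perm 'I_m}}) : {set {perm 'I_m}} :=
  [set pi in S | pi i == i].

(* F^{2n+1}, coordinates 'I_(n + (1 + n)): the block lshift j is coordinate
   j+1 (1-based), the middle one is coordinate n+1, and rshift n (rshift 1 j)
   is coordinate j+n+2. *)
Definition I2 (n : nat) := 'I_(n + (1 + n)).

Definition midx (n : nat) : I2 n := unsplit (inr (unsplit (inl (@ord0 0)))).
Definition lidx (n : nat) (j : 'I_n) : I2 n := unsplit (inl j).
Definition ridx (n : nat) (j : 'I_n) : I2 n := unsplit (inr (unsplit (inr j))).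

Definition vec3 (n : nat) (a : bvec n) (b : bool) (c : bvec n) : bvec (n + (1 + n)) :=
  [ffun i => match split i with
             | inl j => a j
             | inr k => match split k with inl _ => b | inr j => c j end
             end].

Definition vasilev (n : nat) (C : {set bvec n}) (lam : bvec n -> bool)
  : {set bvec (n + (1 + n))} :=
  [set vec3 (vadd x y) (wt2 x (+) lam y) x | x : bvec n, y : bvec n in C].

Definition tr (n : nat) (j : 'I_n) : {perm I2 n} := tperm (lidx j) (ridx j).
Definition tau (n : nat) (u : bvec n) : {perm I2 n} :=
  (\prod_(j < n | u j) tr j)%g.

Definition dupf (n : nat) (pi : {perm 'I_n}) (i : I2 n) : I2 n :=
  match split i with
  | inl j => lidx (pi j)
  | inr k => match split k with
             | inl _ => midx n
             | inr j => ridx (pi j)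
             end
  end.

Lemma dupfK (n : nat) (pi : {perm 'I_n}) : cancel (dupf pi) (dupf (pi^-1)%g).
Proof.
move=> i; rewrite -(splitK i); case: (split i) => [j|k].
  by rewrite /dupf /lidx !unsplitK permK.
rewrite -(splitK k); case: (split k) => [u|j].
  rewrite /dupf /midx !unsplitK; congr (unsplit (inr (unsplit (inl _)))).
  by apply/val_inj; case: u => [[]].
by rewrite /dupf /ridx !unsplitK permK.
Qed.

Lemma dupf_inj (n : nat) (pi : {perm 'I_n}) : injective (dupf pi).
Proof. exact: can_inj (dupfK pi). Qed.

Definition sigma (n : nat) (pi : {perm 'I_n}) : {perm I2 n} := perm (@dupf_inj n pi).

From mathcomp Require Import all_boot all_fingroup.
Set Implicit Arguments. Unset Strict Implicit. Unset Printing Implicit Defensive.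

(* A permutation rho fixing the middle coordinate and rotating V onto itself
   by z must map every pair of coordinates {i, i+n+1} onto a pair: applied to
   the codeword with support {i, n+1, i+n+1} and translated by z it gives a
   codeword whose two halves add up to y' + e_a + e_b, where a and b are the
   pairs hit by rho, and since C has minimum distance 3 this forces a = b.
   Pair-preserving permutations are exactly the sigma_pi o tau_u, and a direct
   computation shows that z + sigma_pi tau_u (x + y, |x| + lambda(y), x) lies
   in V iff y' + pi(y) is in C and
   lambda(y') + lambda(y) + lambda(y' + pi(y)) = u . y. *)

Section BitVectors.
Variable m : nat.
Implicit Types x y z : bvec m.

Definition evec (i : 'I_m) : bvec m := [ffun j => j == i].

Lemma vaddA x y z : vadd (vadd x y) z = vadd x (vadd y z).
Proof. by apply/ffunP => j; rewrite !ffunE addbA. Qed.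

Lemma vaddC x y : vadd x y = vadd y x.
Proof. by apply/ffunP => j; rewrite !ffunE addbC. Qed.

Lemma vaddK x y : vadd (vadd x y) y = x.
Proof. by apply/ffunP => j; rewrite !ffunE addbK. Qed.

Lemma vaddKv x y : vadd (vadd x y) x = y.
Proof. by apply/ffunP => j; rewrite !ffunE addbAC addbb. Qed.

Lemma vaddvv x : vadd x x = bzero m.
Proof. by apply/ffunP => j; rewrite !ffunE addbb. Qed.

Lemma vadd0v x : vadd (bzero m) x = x.
Proof. by apply/ffunP => j; rewrite !ffunE. Qed.

Lemma vaddv0 x : vadd x (bzero m) = x.
Proof. by apply/ffunP => j; rewrite !ffunE addbF. Qed.

Lemma vadd_inj z : injective (vadd z).
Proof.
move=> x y /ffunP E; apply/ffunP => j.
by have := E j; rewrite !ffunE => /addbI.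
Qed.

Lemma permvE (rho : {perm 'I_m}) x i : permv rho x (rho i) = x i.
Proof. by rewrite ffunE permK. Qed.

Lemma permv_eq (rho : {perm 'I_m}) x y :
  (forall i, y (rho i) = x i) -> permv rho x = y.
Proof. by move=> E; apply/ffunP => j; rewrite ffunE -E permKV. Qed.

Lemma permv_inj (rho : {perm 'I_m}) : injective (permv rho).
Proof. by move=> x y E; apply/ffunP => i; rewrite -(permvE rho x) E permvE. Qed.

Lemma permv_vadd (rho : {perm 'I_m}) x y :
  permv rho (vadd x y) = vadd (permv rho x) (permv rho y).
Proof. by apply/ffunP => j; rewrite !ffunE. Qed.

Lemma wt2_vadd x y : wt2 (vadd x y) = wt2 x (+) wt2 y.
Proof. by rewrite /wt2 -big_split; apply: eq_bigr => j _; rewrite ffunE. Qed.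

Lemma wt2_permv (rho : {perm 'I_m}) x : wt2 (permv rho x) = wt2 x.
Proof.
rewrite /wt2 (reindex_inj (@perm_inj _ rho)).
by apply: eq_bigr => j _; rewrite permvE.
Qed.

Lemma dotE (u y : bvec m) : dot u y = wt2 [ffun j => u j && y j].
Proof. by apply: eq_bigr => j _; rewrite ffunE. Qed.

Lemma wt2_evec i : wt2 (evec i) = true.
Proof.
rewrite /wt2 (bigD1 i) //= ffunE eqxx big1 // => j ji.
by rewrite ffunE (negbTE ji).
Qed.

Lemma hdistC x y : hdist x y = hdist y x.
Proof. by apply: eq_card => i; rewrite !inE eq_sym. Qed.

Lemma hdist_vadd_evec x i : hdist x (vadd x (evec i)) <= 1.
Proof.
rewrite -(cards1 i); apply/subset_leq_card/subsetP => j.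
by rewrite !inE !ffunE; case: (j == i); rewrite ?addbF ?eqxx.
Qed.

(* Perfection gives minimum distance 3: c and c + e_a + e_b both lie within
   distance one of c + e_a. *)
Lemma perfect_vadd_evec2 (C : {set bvec m}) c a b :
  perfect C -> c \in C -> vadd c (vadd (evec a) (evec b)) \in C -> a = b.
Proof.
move=> PC cC cabC; pose x := vadd c (evec a).
have /eqP/cards1P [c0 ball_x] := PC x.
have : c \in [set c in C | hdist x c <= 1].
  by rewrite inE cC hdistC hdist_vadd_evec.
have : vadd x (evec b) \in [set c in C | hdist x c <= 1].
  by rewrite inE hdist_vadd_evec andbT /x vaddA.
rewrite ball_x => /set1P xb_c0 /set1P c_c0.
have /ffunP /(_ a) := etrans xb_c0 (esym c_c0).
by rewrite !ffunE eqxx addbT; case: (c a); case: eqP.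
Qed.

End BitVectors.

Section Coordinates.
Variable n : nat.

Lemma lidx_inj : injective (@lidx n).
Proof. by move=> a b /(congr1 split); rewrite /lidx !unsplitK => -[]. Qed.

Lemma ridx_inj : injective (@ridx n).
Proof. by move=> a b /(congr1 val) /= /addnI /addnI /val_inj. Qed.

Lemma lidx_eq a b : (lidx a == lidx b :> I2 n) = (a == b).
Proof. by apply/eqP/eqP => [/lidx_inj|->]. Qed.

Lemma ridx_eq a b : (ridx a == ridx b :> I2 n) = (a == b).
Proof. by apply/eqP/eqP => [/ridx_inj|->]. Qed.

Lemma lidx_ridx a b : (lidx a == ridx b :> I2 n) = false.
Proof. by apply/eqP => /(congr1 split); rewrite /lidx /ridx !unsplitK. Qed.

Lemma ridx_lidx a b : (ridx a == lidx b :> I2 n) = false.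
Proof. by rewrite eq_sym lidx_ridx. Qed.

Lemma lidx_midx a : (lidx a == midx n) = false.
Proof. by apply/eqP => /(congr1 split); rewrite /lidx /midx !unsplitK. Qed.

Lemma ridx_midx a : (ridx a == midx n) = false.
Proof. by apply/eqP => /(congr1 val) /= /addnI. Qed.

Lemma midx_lidx a : (midx n == lidx a) = false.
Proof. by rewrite eq_sym lidx_midx. Qed.

Lemma midx_ridx a : (midx n == ridx a) = false.
Proof. by rewrite eq_sym ridx_midx. Qed.

Definition idx_eqE := (lidx_eq, ridx_eq, lidx_ridx, ridx_lidx,
                       lidx_midx, ridx_midx, midx_lidx, midx_ridx).

Variant idx_spec : I2 n -> Type :=
  | IdxL a : idx_spec (lidx a)
  | IdxM : idx_spec (midx n)
  | IdxR a : idx_spec (ridx a).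

Lemma idxP t : idx_spec t.
Proof.
rewrite -(splitK t); case: (split t) => [a|k]; first exact: IdxL.
rewrite -(splitK k); case: (split k) => [o|a]; last exact: IdxR.
by rewrite (ord1 o); exact: IdxM.
Qed.

(* The j with t \in {lidx j, ridx j}; the junk value d is returned at the
   middle coordinate. *)
Definition pidx (d : 'I_n) (t : I2 n) : 'I_n :=
  match split t with
  | inl j => j
  | inr k => match split k with inl _ => d | inr j => j end
  end.

Lemma pidx_lidx d j : pidx d (lidx j) = j.
Proof. by rewrite /pidx /lidx unsplitK. Qed.

Lemma pidx_ridx d j : pidx d (ridx j) = j.
Proof. by rewrite /pidx /ridx !unsplitK. Qed.

Lemma vec3_lidx (a c : bvec n) b j : vec3 a b c (lidx j) = a j.
Proof. by rewrite ffunE /lidx unsplitK. Qed.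

Lemma vec3_midx (a c : bvec n) b : vec3 a b c (midx n) = b.
Proof. by rewrite ffunE /midx !unsplitK. Qed.

Lemma vec3_ridx (a c : bvec n) b j : vec3 a b c (ridx j) = c j.
Proof. by rewrite ffunE /ridx !unsplitK. Qed.

Definition vec3E := (vec3_lidx, vec3_midx, vec3_ridx).

Lemma vec3_inj (a c a' c' : bvec n) b b' :
  vec3 a b c = vec3 a' b' c' -> [/\ a = a', b = b' & c = c'].
Proof.
move=> E; split.
- by apply/ffunP => j; rewrite -(vec3_lidx a c b) E vec3_lidx.
- by rewrite -(vec3_midx a c b) E vec3_midx.
- by apply/ffunP => j; rewrite -(vec3_ridx a c b) E vec3_ridx.
Qed.

Lemma vadd_vec3 (a c a' c' : bvec n) b b' :
  vadd (vec3 a b c) (vec3 a' b' c') = vec3 (vadd a a') (b (+) b') (vadd c c').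
Proof.
by apply/ffunP => t; rewrite ffunE; case: (idxP t) => *; rewrite !(vec3E, ffunE).
Qed.

Lemma sigma_lidx (pi : {perm 'I_n}) j : sigma pi (lidx j) = lidx (pi j).
Proof. by rewrite permE /dupf /lidx unsplitK. Qed.

Lemma sigma_midx (pi : {perm 'I_n}) : sigma pi (midx n) = midx n.
Proof. by rewrite permE /dupf /midx !unsplitK. Qed.

Lemma sigma_ridx (pi : {perm 'I_n}) j : sigma pi (ridx j) = ridx (pi j).
Proof. by rewrite permE /dupf /ridx !unsplitK. Qed.

Lemma tr_lidx (j : 'I_n) : tr j (lidx j) = ridx j.
Proof. exact: tpermL. Qed.

Lemma tr_ridx (j : 'I_n) : tr j (ridx j) = lidx j.
Proof. exact: tpermR. Qed.

Lemma tr_fix (j : 'I_n) (t : I2 n) : t != lidx j -> t != ridx j -> tr j t = t.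
Proof. by move=> t_l t_r; apply: tpermD; rewrite eq_sym. Qed.

Lemma prod_tr_pair (u : bvec n) (r : seq 'I_n) i : uniq r ->
  let T := (\prod_(j <- r | u j) tr j)%g in
  T (lidx i) = (if u i && (i \in r) then ridx i else lidx i) /\
  T (ridx i) = (if u i && (i \in r) then lidx i else ridx i).
Proof.
elim: r => [|j r IH] /=; first by rewrite big_nil !perm1 andbF.
case/andP => j_r /IH [IHl IHr]; rewrite big_cons in_cons.
case: (eqVneq i j) j_r => [<- i_r|ij _] /=.
  by case: (u i); rewrite ?permM ?tr_lidx ?tr_ridx IHl IHr (negbTE i_r) andbF.
rewrite -IHl -IHr; case: (u j) => //.
by rewrite !permM !tr_fix // idx_eqE.
Qed.

Lemma tau_lidx (u : bvec n) i : tau u (lidx i) = if u i then ridx i else lidx i.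
Proof.
have [-> _] := prod_tr_pair u i (index_enum_uniq 'I_n).
by rewrite mem_index_enum andbT.
Qed.

Lemma tau_ridx (u : bvec n) i : tau u (ridx i) = if u i then lidx i else ridx i.
Proof.
have [_ ->] := prod_tr_pair u i (index_enum_uniq 'I_n).
by rewrite mem_index_enum andbT.
Qed.

Lemma tau_midx (u : bvec n) : tau u (midx n) = midx n.
Proof.
apply: (big_ind (fun s : {perm I2 n} => s (midx n) = midx n)) => [|s t sm tm|j _].
- exact: perm1.
- by rewrite permM sm tm.
- by rewrite tr_fix // idx_eqE.
Qed.

Lemma permv_tau_sigma (u : bvec n) (pi : {perm 'I_n}) (a c : bvec n) b :
  permv (tau u * sigma pi)%g (vec3 a b c) =
  vec3 (permv pi [ffun j => if u j then c j else a j]) b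
       (permv pi [ffun j => if u j then a j else c j]).
Proof.
apply: permv_eq => t; rewrite permM.
case: (idxP t) => [j||j];
  rewrite ?tau_lidx ?tau_midx ?tau_ridx ?sigma_midx ?vec3E //;
  by case uj: (u j); rewrite ?sigma_lidx ?sigma_ridx !vec3E permvE ffunE uj.
Qed.

End Coordinates.

Section BlockSum.
Variable n : nat.
Implicit Types w : bvec (n + (1 + n)).

Definition bsum w : bvec n := [ffun j => w (lidx j) (+) w (ridx j)].

Definition ind (t : I2 n) : bvec (n + (1 + n)) := [ffun s => s == t].

Lemma bsum_vadd w w' : bsum (vadd w w') = vadd (bsum w) (bsum w').
Proof. by apply/ffunP => j; rewrite !ffunE addbACA. Qed.

Lemma bsum_vec3 (a c : bvec n) b : bsum (vec3 a b c) = vadd a c.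
Proof. by apply/ffunP => j; rewrite [LHS]ffunE !vec3E ffunE. Qed.

Lemma bsum_ind_midx : bsum (ind (midx n)) = bzero n.
Proof. by apply/ffunP => j; rewrite !ffunE !idx_eqE. Qed.

Lemma bsum_ind d t : t != midx n -> bsum (ind t) = evec (pidx d t).
Proof.
case: (idxP t) => [a||a]; rewrite ?eqxx // => _; apply/ffunP => j;
  by rewrite !ffunE ?pidx_lidx ?pidx_ridx !idx_eqE ?addbF.
Qed.

Lemma permv_ind (rho : {perm I2 n}) t : permv rho (ind t) = ind (rho t).
Proof. by apply: permv_eq => s; rewrite !ffunE (inj_eq perm_inj). Qed.

Lemma vec3_evec i :
  vec3 (evec i) true (evec i) =
  vadd (vadd (ind (lidx i)) (ind (midx n))) (ind (ridx i)).
Proof.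
apply/ffunP => t; rewrite [RHS]ffunE.
by case: (idxP t) => [a||a]; rewrite !vec3E !ffunE !idx_eqE ?eqxx ?addbF.
Qed.

End BlockSum.

Section VasilevCode.
Variables (n : nat) (C : {set bvec n}) (lam : bvec n -> bool).

Lemma mem_vasilev (a c : bvec n) b :
  (vec3 a b c \in vasilev C lam) =
  (vadd a c \in C) && (b == wt2 c (+) lam (vadd a c)).
Proof.
apply/imset2P/andP => [[x y _ yC /vec3_inj [-> -> ->]]|[acC /eqP ->]].
  by rewrite vaddKv.
by exists c (vadd a c); rewrite // [vadd c _]vaddC vaddK.
Qed.

Lemma bsum_vasilev w : w \in vasilev C lam -> bsum w \in C.
Proof.
by case/imset2P => x y _ yC ->; rewrite bsum_vec3 vaddKv.
Qed.

End VasilevCode.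

Section VasilevRotations.
Variables (n : nat) (C : {set bvec n}) (lam : bvec n -> bool) (y' : bvec n).
Let z := vec3 y' (lam y') (bzero n).

Lemma mem_vasilev_rot (u : bvec n) (pi : {perm 'I_n}) x y :
  (vadd z (permv (tau u * sigma pi)%g (vec3 (vadd x y) (wt2 x (+) lam y) x))
     \in vasilev C lam) =
  (vadd y' (permv pi y) \in C) &&
  (lam y' (+) lam y (+) lam (vadd y' (permv pi y)) == dot u y).
Proof.
rewrite permv_tau_sigma vadd_vec3 mem_vasilev vadd0v.
set a := [ffun j => _]; set c := [ffun j => _].
have -> : vadd (vadd y' (permv pi a)) (permv pi c) = vadd y' (permv pi y).
  rewrite vaddA -permv_vadd; congr (vadd y' (permv pi _)).
  apply/ffunP => j; rewrite !ffunE.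
  by case: (u j); [exact: addKb | rewrite addbAC addbb].
have -> : wt2 (permv pi c) = wt2 x (+) dot u y.
  rewrite wt2_permv dotE -wt2_vadd; congr wt2; apply/ffunP => j.
  by rewrite !ffunE; case: (u j); rewrite ?addbF.
case: (_ \in C) => //=.
by case: (lam y'); case: (lam y); case: (wt2 x); case: (dot u y); case: (lam _).
Qed.

Lemma vasilev_rot_pidx (rho : {perm I2 n}) :
  perfect C -> bzero n \in C -> lam (bzero n) = false -> y' \in C ->
  rho (midx n) = midx n ->
  {in vasilev C lam, forall v, vadd z (permv rho v) \in vasilev C lam} ->
  forall i, pidx i (rho (lidx i)) = pidx i (rho (ridx i)).
Proof.
move=> PC C0 lam0 y'C rho_m rhoV i.
have viV : vec3 (evec i) true (evec i) \in vasilev C lam.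
  by rewrite mem_vasilev vaddvv C0 lam0 wt2_evec.
have bsum_rho t : t != midx n -> bsum (ind (rho t)) = evec (pidx i (rho t)).
  by move=> tm; apply: bsum_ind; rewrite -rho_m (inj_eq perm_inj).
have := bsum_vasilev (rhoV _ viV).
rewrite bsum_vadd bsum_vec3 vaddv0 vec3_evec !permv_vadd !permv_ind rho_m.
rewrite !bsum_vadd bsum_ind_midx vaddv0 !bsum_rho ?idx_eqE //.
exact: perfect_vadd_evec2.
Qed.

End VasilevRotations.

Section PairPreservingPermutations.
Variables (n : nat) (rho : {perm I2 n}).
Hypothesis rho_midx : rho (midx n) = midx n.
Hypothesis rho_pidx : forall i, pidx i (rho (lidx i)) = pidx i (rho (ridx i)).

Let pair_index i := pidx i (rho (lidx i)).

Lemma rho_pair_image i :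
  (rho (lidx i) = lidx (pair_index i) /\ rho (ridx i) = ridx (pair_index i)) \/
  (rho (lidx i) = ridx (pair_index i) /\ rho (ridx i) = lidx (pair_index i)).
Proof.
have rho_neq s t : s != t -> rho s != rho t by rewrite (inj_eq perm_inj).
have := rho_neq _ _ (negbT (lidx_ridx i i)).
have := rho_neq _ _ (negbT (lidx_midx i)).
have := rho_neq _ _ (negbT (ridx_midx i)).
move: (rho_pidx i); rewrite /pair_index rho_midx.
case: (idxP (rho (lidx i))) => [a||a]; case: (idxP (rho (ridx i))) => [b||b];
  rewrite ?pidx_lidx ?pidx_ridx ?idx_eqE ?eqxx // => <- _ _ aa;
  by [left | right | rewrite eqxx in aa].
Qed.

Lemma pair_index_inj : injective pair_index.
Proof.
move=> i1 i2 f12; apply: lidx_inj; apply: (@perm_inj _ rho).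
case: (rho_pair_image i1) => [[l1 r1]|[l1 r1]];
  case: (rho_pair_image i2) => [[l2 r2]|[l2 r2]]; rewrite f12 in l1 r1;
  first [by rewrite l1 l2 |
         by have /perm_inj/eqP := etrans l1 (esym r2); rewrite idx_eqE].
Qed.

Lemma pair_perm_decomposition :
  exists (pi : {perm 'I_n}) (u : bvec n), rho = (tau u * sigma pi)%g.
Proof.
exists (perm pair_index_inj), [ffun i => rho (lidx i) == ridx (pair_index i)].
apply/permP => t; rewrite permM.
case: (idxP t) => [i||i];
  rewrite ?tau_lidx ?tau_midx ?tau_ridx ?sigma_midx // ffunE;
  by case: (rho_pair_image i) => [[l r]|[l r]];
     rewrite ?r l ?idx_eqE ?eqxx ?sigma_lidx ?sigma_ridx permE.
Qed.

End PairPreservingPermutations.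

Lemma RotP m (z : bvec m) (D : {set bvec m}) (pi : {perm 'I_m}) :
  reflect {in D, forall x, vadd z (permv pi x) \in D} (pi \in Rot z D).
Proof.
rewrite inE eqEcard card_imset; last by move=> x y /vadd_inj /permv_inj.
rewrite leqnn andbT; apply: (iffP subsetP) => sub.
  by move=> x xD; apply/sub/imset_f.
by move=> _ /imsetP [x xD ->]; apply: sub.
Qed.

(* In mathcomp (s * t)%g applies s first, so (tau u * sigma pi)%g is the
   paper's sigma_pi o tau_u. *)
Theorem theorem2 (k n : nat) (C : {set bvec n}) (lam : bvec n -> bool)
    (y' : bvec n) :
  n = 2 ^ k - 1 ->
  perfect C ->
  bzero n \in C ->
  lam (bzero n) = false ->
  y' \in C ->
  forall rho : {perm 'I_(n + (1 + n))},
    rho \in St (midx n) (Rot (vec3 y' (lam y') (bzero n)) (vasilev C lam)) <->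
    exists (pi : {perm 'I_n}) (u : bvec n),
      [/\ pi \in Rot y' C,
          (forall y : bvec n, y \in C ->
             lam y' (+) lam y (+) lam (vadd y' (permv pi y)) = dot u y)
        & rho = (tau u * sigma pi)%g].
Proof.
move=> _ PC C0 lam0 y'C rho; rewrite inE; split.
- case/andP => /RotP rhoV /eqP rho_m.
  have [pi [u rho_eq]] :=
    pair_perm_decomposition rho_m (vasilev_rot_pidx PC C0 lam0 y'C rho_m rhoV).
  have imC y : y \in C -> (vadd y' (permv pi y) \in C) &&
      (lam y' (+) lam y (+) lam (vadd y' (permv pi y)) == dot u y).
    move=> yC; rewrite -(mem_vasilev_rot C lam y' u pi (bzero n) y) -rho_eq.
    exact/rhoV/imset2_f.
  exists pi, u; split => //.
    by apply/RotP => y /imC /andP [].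
  by move=> y /imC /andP [_ /eqP].
- case=> pi [u [/RotP piC lamE ->]].
  rewrite permM tau_midx sigma_midx eqxx andbT.
  apply/RotP => _ /imset2P [x y _ yC ->].
  by rewrite mem_vasilev_rot piC //= lamE // eqxx.
Qed.
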